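(* In the setting of the context, let $i,j\in\{0,\dots,m\}$ with $i\ne j$, and let $R$ be a cyclic extension of $k$ of degree $p^d$. Set $F=K_i\cap K_j\cap R$ and $p^h=[F:k]$. Suppose that $R\subseteq K_iK_j$ and $d\le\min\{\epsilon_i,\epsilon_j\}$. Then $d+e_{i,j}-h\le\min\{\epsilon_i,\epsilon_j\}$ and $R\subseteq K_i(d+e_{i,j}-h)K_j(d+e_{i,j}-h)$.
   Context: $k$ is a global field, all extensions lie in a separable closure. $p$ is a prime, $m\ge2$, $K_0,\dots,K_m$ are cyclic extensions of $k$ with $[K_i:k]=p^{\epsilon_i}$, $\epsilon_0\le\epsilon_i$ for all $i$, $\bigcap_{i=0}^mK_i=k$, and $K_j\not\subseteq K_i$ for $i\ne j$. For $0\le f\le\epsilon_i$, $K_i(f)$ is the unique subfield of $K_i$ of degree $p^f$ over $k$, and $p^{e_{i,j}}=[K_i\cap K_j:k]$. *)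

From HB Require Import structures.
From mathcomp Require Import all_boot all_order all_algebra all_fingroup all_solvable all_field.
Set Implicit Arguments. Unset Strict Implicit. Unset Printing Implicit Defensive.
Import GRing.Theory.
Local Open Scope ring_scope.

Definition is_number_field (F : fieldType) : Prop :=
  [pchar F] =i pred0 /\
  exists s : seq F, forall x : F,
    exists c : seq rat, x = \sum_(i < size s) ratr c`_i * s`_i.

Definition zpoly_eval (F : fieldType) (q : {poly int}) (t : F) : F :=
  (map_poly intr q).[t].

(* A global function field: characteristic p > 0, containing an element t
   transcendental over F_p, and finite-dimensional over F_p(t). *)
Definition is_function_field (F : fieldType) : Prop :=
  exists p : nat, p \in [pchar F] /\
  exists t : F,
    (forall q : {poly int}, zpoly_eval q t = 0 -> forall i, (p%:Z %| q`_i)%Z) /\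
    exists s : seq F, forall x : F,
      exists a b : seq {poly int},
        x = \sum_(i < size s) (zpoly_eval a`_i t / zpoly_eval b`_i t) * s`_i.

Definition is_global_field (F : fieldType) : Prop :=
  is_number_field F \/ is_function_field F.

Definition cyclic_ext (F0 : fieldType) (L : splittingFieldType F0)
  (E : {subfield L}) : bool :=
  galois 1%VS E && cyclic 'Gal(E / 1%VS).

From HB Require Import structures.
From mathcomp Require Import all_boot all_order all_algebra all_fingroup all_solvable all_field.

(* All the work happens in G = Gal(E/k) for E = K_i K_j, which is abelian
   since it embeds in Gal(K_i/k) x Gal(K_j/k).
   Bound: the subfields of the cyclic p-extension K_j form a chain.  Either
   K_i ∩ K_j ⊆ R, so F = K_i ∩ K_j, h = e_ij and the bound is d <= eps_i; or
   R ∩ K_j ⊆ K_i ∩ K_j, so F = R ∩ K_j and [R K_j : k] | [K_i K_j : k] reads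
   p^(d + eps_j - h) | p^(eps_i + eps_j - e_ij).
   Inclusion: with n = d + e_ij - h, every element of Gal(E/K_i(n)) is
   u z^(p^n) with u ∈ Gal(E/K_i) and z ∈ G.  If x = u z1^(p^n) = v z2^(p^n)
   also lies in Gal(E/K_j(n)), write (z2 z1^-1)^(p^e_ij) = w v' with
   w ∈ Gal(E/K_i) and v' ∈ Gal(E/K_j).  These two groups meet trivially, so
   u = w^(p^(d-h)), which fixes R because w fixes F and [R : F] = p^(d-h);
   and z1^(p^n) fixes R because [R : k] = p^d divides p^n. *)

Set Implicit Arguments. Unset Strict Implicit. Unset Printing Implicit Defensive.
Local Open Scope group_scope.

Section PowersInGroups.
Variable gT : finGroupType.
Implicit Types G H S T : {group gT}.

Lemma expg_indexg_mem G H z :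
  H \subset G -> G \subset 'N(H) -> z \in G -> z ^+ #|G : H| \in H.
Proof.
move=> sHG nHG Gz; have Nz := subsetP nHG z Gz.
apply: coset_idr; first by rewrite groupX.
by rewrite morphX // -card_quotient // expg_cardG ?mem_quotient.
Qed.

Lemma morphpre_cycleX_sub (rT : finGroupType) G (f : {morphism G >-> rT}) s q :
  f @* G = <[s]> -> f @*^-1 <[s ^+ q]> \subset 'ker f * [set z ^+ q | z in G].
Proof.
move=> imf; apply/subsetP => x /morphpreP[Gx /cycleP[l fx]].
have /morphimP[g _ Gg fg] : s \in f @* G by rewrite imf cycle_id.
have Ggl : (g ^+ l) ^+ q \in G by rewrite !groupX.
apply/mulsgP; exists (x * ((g ^+ l) ^+ q)^-1) ((g ^+ l) ^+ q); last 2 first.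
- exact: imset_f (groupX l Gg).
- by rewrite mulgKV.
apply/kerP; first by rewrite groupM ?groupV.
by rewrite morphM ?groupV ?morphV ?morphX ?groupX // fx -fg -!expgM mulnC mulgV.
Qed.

Lemma index_morphpre_cycleX (rT : finGroupType) G (f : {morphism G >-> rT}) s q :
  f @* G = <[s]> -> q %| #[s] -> #|G : f @*^-1 <[s ^+ q]>| = q.
Proof.
move=> imf dvd_q_s; rewrite -{1}(morphpreT f) -morphpreIim setIT.
rewrite index_morphpre // -divgS /= imf ?cycle_subG ?mem_cycle //.
by rewrite -!orderE orderXdiv // divnA // mulKn.
Qed.

Lemma abelian_mul_powers_meet_sub G H1 H2 S T q :
    abelian G -> H1 \subset T -> S \subset T -> T \subset G -> H2 \subset G ->
    H1 :&: H2 = 1 -> #|G : S| %| q -> q = (#|G : H1 <*> H2| * #|T : S|)%N ->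
  (H1 * [set z ^+ q | z in G]) :&: (H2 * [set z ^+ q | z in G]) \subset S.
Proof.
move=> abG sH1T sST sTG sH2G tiH12 dvd_q defq.
have sH1G := subset_trans sH1T sTG; have sSG := subset_trans sST sTG.
have nSG := sub_abelian_norm abG sSG.
have cG : {in G &, forall x y, commute x y}.
  by move=> x y Gx Gy; apply: (centsP abG).
have powS z : z \in G -> z ^+ q \in S.
  move=> Gz; have [k ->] := dvdnP dvd_q; rewrite expgM.
  by rewrite expg_indexg_mem ?groupX.
have defH12 : H1 <*> H2 = H1 * H2.
  by rewrite cent_joinEl ?(sub_abelian_cent2 abG sH1G sH2G).
apply/subsetP => x /setIP[/mulsgP[u _ H1u /imsetP[z1 Gz1 ->] ->]].
case/mulsgP=> v _ H2v /imsetP[z2 Gz2 ->] eq_x.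
rewrite groupM ?powS //.
set z := z2 * z1^-1; have Gz : z \in G by rewrite groupM ?groupV.
have def_u : u = v * z ^+ q.
  rewrite expgMn; last by apply: cG; rewrite ?groupV.
  by rewrite expVgn mulgA -eq_x mulgK.
have /mulsgP[w v' H1w H2v' def_zb] : z ^+ #|G : H1 <*> H2| \in H1 * H2.
  by rewrite -defH12 expg_indexg_mem ?sub_abelian_norm // join_subG sH1G.
have Gw := subsetP sH1G w H1w; have Gv' := subsetP sH2G v' H2v'.
set c := #|T : S|; have {def_u} def_u : u = w ^+ c * (v * v' ^+ c).
  rewrite def_u defq expgM def_zb expgMn; last exact: cG.
  by rewrite mulgA (cG v (w ^+ c)) ?groupX ?(subsetP sH2G v) // mulgA.
suff -> : u = w ^+ c.
  by rewrite expg_indexg_mem ?(subsetP sH1T) ?(subset_trans sTG nSG).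
have : (w ^+ c)^-1 * u \in H1 :&: H2.
  by rewrite inE groupM ?groupV ?groupX //= def_u mulKg groupM ?groupX.
by rewrite tiH12 => /set1gP/eqP; rewrite -eq_mulVg1 => /eqP.
Qed.

End PowersInGroups.

Section GaloisCorrespondence.
Variables (F0 : fieldType) (L : splittingFieldType F0).
Implicit Types K E F M X Y R A B : {subfield L}.

Lemma galvv E : 'Gal(E / E) = 1.
Proof.
apply/trivgP/subsetP => x galEx; rewrite inE; apply/gal_eqP => a Ea.
by rewrite gal_id (fixed_gal (subvv E) galEx Ea).
Qed.

Lemma galois_prodv K (M1 M2 : {subfield L}) :
  galois K M1 -> galois K M2 -> galois K (M1 * M2)%AS.
Proof.
move=> /and3P[sKM1 sepKM1 nKM1] /and3P[_ sepKM2 nKM2].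
rewrite /galois (subv_trans sKM1 (field_subvMr _ _)) /=; apply/andP; split.
  apply: (separable_trans sepKM1); apply: (separableSr (E := <<M1 & vbasis M2>>%AS)).
    apply: prodv_sub; first exact: subv_adjoin_seq.
    rewrite -{1}(span_basis (vbasisP M2)).
    by apply: subv_trans (sub_agenv _); apply: addvSr.
  apply/separable_Fadjoin_seq/allP => x /vbasis_mem M2x.
  exact: separable_elementS sKM1 (separableP sepKM2 x M2x).
apply/forall_inP => f autKf.
by rewrite aimgM (eqP (forall_inP nKM1 f autKf)) (eqP (forall_inP nKM2 f autKf)).
Qed.

Lemma gal_prodv E (M1 M2 : {subfield L}) : (M1 <= E)%VS -> (M2 <= E)%VS ->
  'Gal(E / (M1 * M2)%AS) = 'Gal(E / M1) :&: 'Gal(E / M2).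
Proof.
move=> sM1E sM2E; have sM12E : ((M1 * M2)%AS <= E)%VS by apply: prodv_sub.
apply/eqP; rewrite eqEsubset subsetI !galS ?field_subvMr ?field_subvMl //=.
by rewrite galois_connection // prodv_sub // -galois_connection ?subsetIl ?subsetIr.
Qed.

Lemma gal_capv E (M1 M2 : {subfield L}) : galois M1 E -> galois M2 E ->
  'Gal(E / (M1 :&: M2)%AS) = 'Gal(E / M1) <*> 'Gal(E / M2).
Proof.
move=> gM1E gM2E; set J := ('Gal(E / M1) <*> 'Gal(E / M2))%G.
have fixJ M : galois M E -> 'Gal(E / M) \subset J -> (fixedField J <= M)%VS.
  by move=> gME sMJ; rewrite -(galois_fixedField gME) fixedFieldS.
apply/eqP; rewrite eqEsubset join_subG !galS ?capvSl ?capvSr //= andbT.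
rewrite -(gal_fixedField J) galS // subv_cap.
by rewrite !fixJ ?joing_subl ?joing_subr.
Qed.

Lemma indexg_gal E (M1 M2 : {subfield L}) : galois M1 E -> (M1 <= M2 <= E)%VS ->
  #|'Gal(E / M1) : 'Gal(E / M2)| = \dim_M1 M2.
Proof.
move=> gM1E sM12E; have gM2E := galoisS sM12E gM1E.
have [sM12 sM2E] := andP sM12E; have sM1E := subv_trans sM12 sM2E.
apply/eqP; rewrite -(eqn_pmul2l (cardG_gt0 'Gal(E / M2))) Lagrange ?galS //.
rewrite -!galois_dim // -(eqn_pmul2r (adim_gt0 M1)) -mulnA -!dim_sup_field //.
Qed.

Lemma card_gal1 E : galois 1 E -> #|'Gal(E / 1)| = \dim E.
Proof. by move/galois_dim <-; rewrite dimv1 divn1. Qed.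

Lemma indexg_gal1 E M :
  galois 1 E -> (M <= E)%VS -> #|'Gal(E / 1) : 'Gal(E / M)| = \dim M.
Proof. by move=> gE sME; rewrite indexg_gal ?sub1v // dimv1 divn1. Qed.

Lemma subv_dim_expn_leq (M1 M2 : {subfield L}) p x y : prime p -> (M1 <= M2)%VS ->
  \dim M1 = (p ^ x)%N -> \dim M2 = (p ^ y)%N -> x <= y.
Proof.
by move=> p_pr /field_dimS + dimM1 dimM2; rewrite dimM1 dimM2 dvdn_Pexp2l ?prime_gt1.
Qed.

Lemma abelian_gal_prodv (M1 M2 : {subfield L}) :
    galois 1 M1 -> galois 1 M2 -> abelian 'Gal(M1 / 1) -> abelian 'Gal(M2 / 1) ->
  abelian 'Gal((M1 * M2)%AS / 1).
Proof.
move=> gM1 gM2 abM1 abM2; set E := (M1 * M2)%AS.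
have gE : galois 1 E by apply: galois_prodv.
have der1_sub M : galois 1 M -> abelian 'Gal(M / 1) -> (M <= E)%VS ->
    'Gal(E / 1)^`(1) \subset 'Gal(E / M).
  move=> /and3P[_ _ nM] abM sME; have sKME : (1 <= M <= E)%VS by rewrite sub1v.
  apply: der1_min; first exact: normal_norm (normalField_normal sKME nM).
  by rewrite (isog_abelian (normalField_isog gE sKME nM)).
apply/derG1P/trivgP; rewrite -(galvv E) {2}/E gal_prodv ?field_subvMr ?field_subvMl //.
by rewrite subsetI !der1_sub ?field_subvMr ?field_subvMl.
Qed.

Lemma dim_prodv_capv E (M1 M2 : {subfield L}) :
    galois 1 E -> abelian 'Gal(E / 1) -> (M1 <= E)%VS -> (M2 <= E)%VS ->
  (\dim (M1 * M2)%AS * \dim (M1 :&: M2)%AS = \dim M1 * \dim M2)%N.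
Proof.
move=> gE abE sM1E sM2E.
have sM12E : ((M1 * M2)%AS <= E)%VS by apply: prodv_sub.
have sMcapE : ((M1 :&: M2)%AS <= E)%VS by apply: subv_trans (capvSl _ _) sM1E.
have cardE M : (M <= E)%VS -> (#|'Gal(E / M)| * \dim M)%N = #|'Gal(E / 1)|.
  by move=> sME; rewrite -(indexg_gal1 gE sME) Lagrange ?galS ?sub1v.
have galE M : (M <= E)%VS -> galois M E by move=> sME; rewrite (galoisS _ gE) ?sub1v.
have := mul_cardG 'Gal(E / M1) 'Gal(E / M2).
rewrite -gal_prodv // -cent_joinEl ?(sub_abelian_cent2 abE) ?galS ?sub1v //.
rewrite -gal_capv ?galE // => card_mul.
have pos : (0 < #|'Gal(E / M1)| * #|'Gal(E / M2)|)%N by rewrite muln_gt0 !cardG_gt0.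
apply/eqP; rewrite -(eqn_pmul2l pos) {1}card_mul (mulnC (\dim _)).
by rewrite [X in X == _]mulnACA [X in _ == X]mulnACA !cardE.
Qed.

Lemma cyclic_subfields_total Y (M1 M2 : {subfield L}) p b :
    prime p -> galois 1 Y -> cyclic 'Gal(Y / 1) -> \dim Y = (p ^ b)%N ->
    (M1 <= Y)%VS -> (M2 <= Y)%VS ->
  (M1 <= M2)%VS || (M2 <= M1)%VS.
Proof.
move=> p_pr gY cycY dimY sM1Y sM2Y.
have subvE M M' : (M <= Y)%VS -> (M' <= Y)%VS ->
    (M <= M')%VS = (#|'Gal(Y / M')| %| #|'Gal(Y / M)|).
  move=> sMY sM'Y; rewrite (cardSg_cyclic cycY) ?(galS _ (sub1v _)) //.
  have gM'Y : galois M' Y by rewrite (galoisS _ gY) ?sub1v.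
  by rewrite galois_connection // (galois_fixedField gM'Y).
have cardG M : (M <= Y)%VS -> exists x, #|'Gal(Y / M)| = (p ^ x)%N.
  move=> sMY; have : #|'Gal(Y / M)| %| p ^ b.
    by rewrite -dimY -card_gal1 // cardSg ?(galS _ (sub1v _)).
  by case/(dvdn_pfactor _ _ p_pr) => x _ ->; exists x.
have [[x1 cardM1] [x2 cardM2]] := (cardG M1 sM1Y, cardG M2 sM2Y).
rewrite (subvE M1 M2) // (subvE M2 M1) // cardM1 cardM2.
by rewrite !dvdn_Pexp2l ?prime_gt1 ?leq_total.
Qed.

Lemma dim_capv_prodv_dvd E X Y R p b :
    galois 1 E -> abelian 'Gal(E / 1) -> (X <= E)%VS -> (Y <= E)%VS ->
    prime p -> galois 1 Y -> cyclic 'Gal(Y / 1) -> \dim Y = (p ^ b)%N ->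
    (R <= X * Y)%VS -> \dim R %| \dim X ->
  \dim R * \dim (X :&: Y) %| \dim X * \dim (X :&: Y :&: R).
Proof.
move=> gE abE sXE sYE p_pr gY cycY dimY sRXY dvd_RX.
have sRE : (R <= E)%VS by apply: subv_trans sRXY (prodv_sub sXE sYE).
have [sRY_XY | sXY_RY] := orP (cyclic_subfields_total p_pr gY cycY dimY
  (capvSr R Y) (capvSr X Y)); last first.
  have -> : (X :&: Y :&: R)%VS = (X :&: Y)%VS.
    by apply/capv_idPl; apply: subv_trans sXY_RY (capvSl _ _).
  by rewrite dvdn_mul.
have -> : (X :&: Y :&: R)%VS = (R :&: Y)%VS.
  apply/eqP; rewrite eqEsubv; apply/andP; split.
    by rewrite subv_cap capvSr (subv_trans (capvSl _ _) (capvSr _ _)).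
  by rewrite subv_cap capvSl andbT; apply: sRY_XY.
have dvd_RY_XY : \dim (R * Y)%AS %| \dim (X * Y)%AS.
  by apply/field_dimS/prodv_sub; rewrite ?field_subvMl ?(subv_trans sRXY) ?prodvSl.
have dimRY := dim_prodv_capv gE abE sRE sYE.
have dimXY := dim_prodv_capv gE abE sXE sYE.
rewrite -(dvdn_pmul2r (adim_gt0 Y)) mulnAC -dimRY [X in _ %| X]mulnAC -dimXY.
by rewrite mulnAC !dvdn_pmul2r ?adim_gt0.
Qed.

Lemma dim_capv_prodv_expn_leq E X Y R p a b d e h :
    galois 1 E -> abelian 'Gal(E / 1) -> (X <= E)%VS -> (Y <= E)%VS ->
    prime p -> galois 1 Y -> cyclic 'Gal(Y / 1) -> \dim Y = (p ^ b)%N ->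
    (R <= X * Y)%VS -> \dim X = (p ^ a)%N -> \dim (X :&: Y) = (p ^ e)%N ->
    \dim R = (p ^ d)%N -> \dim (X :&: Y :&: R) = (p ^ h)%N -> d <= a ->
  d + e - h <= a.
Proof.
move=> gE abE sXE sYE p_pr gY cycY dimY sRXY dimX dimXY dimR dimF le_da.
have dvd_RX : \dim R %| \dim X by rewrite dimR dimX dvdn_exp2l.
have := dim_capv_prodv_dvd gE abE sXE sYE p_pr gY cycY dimY sRXY dvd_RX.
by rewrite dimR dimX dimXY dimF -!expnD dvdn_Pexp2l ?prime_gt1 // leq_subLR (addnC h).
Qed.

Lemma cyclic_compositum_expn_leq E X Y R p a b d e h :
    galois 1 E -> abelian 'Gal(E / 1) -> (X <= E)%VS -> (Y <= E)%VS -> prime p ->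
    galois 1 X -> cyclic 'Gal(X / 1) -> galois 1 Y -> cyclic 'Gal(Y / 1) ->
    \dim X = (p ^ a)%N -> \dim Y = (p ^ b)%N -> \dim (X :&: Y) = (p ^ e)%N ->
    (R <= X * Y)%VS -> \dim R = (p ^ d)%N -> \dim (X :&: Y :&: R) = (p ^ h)%N ->
    d <= minn a b ->
  d + e - h <= minn a b.
Proof.
move=> gE abE sXE sYE p_pr gX cycX gY cycY dimX dimY dimXY sRXY dimR dimF.
rewrite !leq_min => /andP[le_da le_db]; apply/andP; split.
  exact: dim_capv_prodv_expn_leq gE abE sXE sYE p_pr gY cycY dimY sRXY
    dimX dimXY dimR dimF le_da.
have sRYX : (R <= Y * X)%VS by rewrite prodvC.
have dimYX : \dim (Y :&: X) = (p ^ e)%N by rewrite capvC.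
have dimF' : \dim (Y :&: X :&: R) = (p ^ h)%N by rewrite (capvC Y).
exact: dim_capv_prodv_expn_leq gE abE sYE sXE p_pr gX cycX dimX sRYX
  dimY dimYX dimR dimF' le_db.
Qed.

Lemma cyclic_subfield_gal_powers E X q :
    galois 1 E -> (X <= E)%VS -> galois 1 X -> cyclic 'Gal(X / 1) -> q %| \dim X ->
  exists2 A : {subfield L}, (A <= X)%VS /\ \dim A = q &
    'Gal(E / A) \subset 'Gal(E / X) * [set z ^+ q | z in 'Gal(E / 1)].
Proof.
move=> gE sXE gX /cyclicP[s defGX] dvd_q_X.
have sKXE : (1 <= X <= E)%VS by rewrite sub1v.
have nX : normalField 1 X by case/and3P: gX.
set f := normalField_cast_morphism sKXE nX.
have imf : f @* 'Gal(E / 1) = <[s]> by rewrite normalField_img.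
have kerf : 'ker f = 'Gal(E / X) := normalField_ker sKXE nX.
have dvd_q_s : q %| #[s] by rewrite orderE -defGX card_gal1.
set T := (f @*^-1 <[s ^+ q]>)%G.
exists (fixedField T); last by rewrite gal_fixedField -kerf morphpre_cycleX_sub.
split.
  apply: subv_trans (fixedFieldS (_ : 'Gal(E / X) \subset T)) _.
    by rewrite -kerf ker_sub_pre.
  by rewrite (galois_fixedField (galoisS sKXE gE)).
by rewrite -(indexg_gal1 gE (fixedField_bound T)) gal_fixedField index_morphpre_cycleX.
Qed.

Lemma subv_prodv_of_gal_powers E X Y R F A B q :
    galois 1 E -> abelian 'Gal(E / 1) ->
    (X <= E)%VS -> (Y <= E)%VS -> (E <= X * Y)%VS -> (R <= E)%VS -> (F <= X :&: R)%VS ->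
    (A <= E)%VS -> 'Gal(E / A) \subset 'Gal(E / X) * [set z ^+ q | z in 'Gal(E / 1)] ->
    (B <= E)%VS -> 'Gal(E / B) \subset 'Gal(E / Y) * [set z ^+ q | z in 'Gal(E / 1)] ->
    \dim R %| q -> q = (\dim (X :&: Y) * \dim_F R)%N ->
  (R <= A * B)%VS.
Proof.
move=> gE abE sXE sYE sEXY sRE sFXR sAE galA sBE galB dvd_R_q defq.
have [sFX sFR] := andP (etrans (esym (subv_cap F X R)) sFXR).
have galE M : (M <= E)%VS -> galois M E by move=> sME; rewrite (galoisS _ gE) ?sub1v.
have sABE : ((A * B)%AS <= E)%VS by apply: prodv_sub.
rewrite -(galois_fixedField (galE _ sABE)) -galois_connection // gal_prodv //.
apply: subset_trans (setISS galA galB) _.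
apply: (abelian_mul_powers_meet_sub (T := 'Gal(E / F))) => //.
- exact: galS sFX.
- exact: galS sFR.
- exact: galS (sub1v _).
- exact: galS (sub1v _).
- by apply/trivgP; rewrite -(galvv E) /= -gal_prodv // galS.
- by rewrite /= (indexg_gal1 gE sRE).
have sXYE : ((X :&: Y)%AS <= E)%VS by apply: subv_trans (capvSl _ _) sXE.
rewrite /= -gal_capv ?galE // (indexg_gal1 gE sXYE).
have sFRE : (F <= R <= E)%VS by rewrite sFR.
by rewrite (indexg_gal (galE F (subv_trans sFR sRE)) sFRE).
Qed.

End GaloisCorrespondence.

Local Close Scope group_scope.
Local Open Scope ring_scope.
Unset Implicit Arguments.

Theorem lemma4p3 (k : fieldType) (L : splittingFieldType k)
  (p m : nat) (K : 'I_m.+1 -> {subfield L}) (eps : 'I_m.+1 -> nat)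
  (e : 'I_m.+1 -> 'I_m.+1 -> nat)
  (i j : 'I_m.+1) (R : {subfield L}) (d h : nat) :
  is_global_field k ->
  prime p -> (2 <= m)%N ->
  (forall l, cyclic_ext (K l)) ->
  (forall l, \dim (K l) = (p ^ eps l)%N) ->
  (forall l, (eps ord0 <= eps l)%N) ->
  (\bigcap_(l < m.+1) (K l : {vspace L}))%VS = 1%VS ->
  (forall l l', l != l' -> ~~ (K l' <= K l)%VS) ->
  (forall l l', \dim (K l :&: K l')%VS = (p ^ e l l')%N) ->
  i != j ->
  cyclic_ext R -> \dim R = (p ^ d)%N ->
  \dim (K i :&: K j :&: R)%VS = (p ^ h)%N ->
  (R <= (K i * K j)%AS)%VS ->
  (d <= minn (eps i) (eps j))%N ->
  (d + e i j - h <= minn (eps i) (eps j))%N /\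
  exists A B : {subfield L},
    [/\ (A <= K i)%VS, \dim A = (p ^ (d + e i j - h))%N,
        (B <= K j)%VS, \dim B = (p ^ (d + e i j - h))%N
      & (R <= (A * B)%AS)%VS].
Proof.
move=> _ p_pr _ cycK dimK _ _ _ dimKK _ _ dimR dimF sRE le_d_eps.
have [/andP[gKi cycKi] /andP[gKj cycKj]] := (cycK i, cycK j).
set E := (K i * K j)%AS in sRE.
have gE : galois 1 E := galois_prodv gKi gKj.
have abE := abelian_gal_prodv gKi gKj (cyclic_abelian cycKi) (cyclic_abelian cycKj).
have [sKiE sKjE] := (field_subvMr (K i) (K j), field_subvMl (K i) (K j)).
have le_n_eps := cyclic_compositum_expn_leq gE abE sKiE sKjE p_pr gKi cycKi gKj cycKj
  (dimK i) (dimK j) (dimKK i j) sRE dimR dimF le_d_eps.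
split => //; set n := (d + e i j - h)%N in le_n_eps *.
have dvd_n l : (n <= eps l)%N -> (p ^ n %| \dim (K l))%N.
  by move=> le_n; rewrite dimK dvdn_exp2l.
move: le_n_eps; rewrite leq_min => /andP[/dvd_n dvd_n_i /dvd_n dvd_n_j].
have [A [sAKi dimA] galA] := cyclic_subfield_gal_powers gE sKiE gKi cycKi dvd_n_i.
have [B [sBKj dimB] galB] := cyclic_subfield_gal_powers gE sKjE gKj cycKj dvd_n_j.
exists A, B; split => //.
have le_h_d : (h <= d)%N := subv_dim_expn_leq p_pr (capvSr _ R) dimF dimR.
have le_h_e : (h <= e i j)%N := subv_dim_expn_leq p_pr (capvSl _ R) dimF (dimKK i j).
apply: (subv_prodv_of_gal_powers (F := (K i :&: K j :&: R)%AS) gE abE sKiE sKjE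
  (subvv E) sRE _ (subv_trans sAKi sKiE) galA (subv_trans sBKj sKjE) galB).
- by rewrite subv_cap capvSr andbT (subv_trans (capvSl _ _) (capvSl _ _)).
- by rewrite dimR dvdn_exp2l // /n -addnBA // leq_addr.
by rewrite dimKK dimR dimF -expnB ?prime_gt0 // -expnD /n addnBA // addnC.
Qed.
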